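(* Let $k \ge 2$ and $n$ be positive integers, and let $a_1<\dots<a_r<n-1$ be positive integers. Then there is a connected graph $G$ with \[\mathrm{SW}_k(G)=\mathrm{SW}_k(S_n)-\binom{a_1}{k-1}-\dots-\binom{a_r}{k-1}.\]
   Context: $S_n$ denotes the star graph on $n$ vertices (one center adjacent to the other $n-1$ vertices, with $n-1$ edges). For a connected graph $G$ and a subset $S \subset V(G)$, the Steiner distance $d(S)$ is the smallest number of edges in a connected subgraph of $G$ whose vertex set contains $S$. For an integer $k\ge 2$, the Steiner--Wiener $k$ index of $G$ is $\mathrm{SW}_k(G)=\sum_{S \subset V(G),\ |S|=k} d(S)$. *)

From mathcomp Require Import all_boot all_order all_algebra.
Set Implicit Arguments. Unset Strict Implicit. Unset Printing Implicit Defensive.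

Definition simple_graph (T : finType) (e : rel T) :=
  symmetric e /\ irreflexive e.

Definition gconnected (T : finType) (e : rel T) :=
  0 < #|T| /\ forall x y : T, connect e x y.

Definition gedges (T : finType) (e : rel T) : {set {set T}} :=
  [set f : {set T} | [exists x, exists y, e x y && (f == [set x; y])]].

Definition is_subgraph (T : finType) (e : rel T) (W : {set T}) (F : {set {set T}}) :=
  (F \subset gedges e) && [forall f in F, f \subset W].

Definition frel_of (T : finType) (F : {set {set T}}) : rel T :=
  fun x y => [set x; y] \in F.

Definition sub_connected (T : finType) (W : {set T}) (F : {set {set T}}) :=
  [forall u in W, forall v in W, connect (frel_of F) u v].

Definition steiner_adm (T : finType) (e : rel T) (S : {set T})
    (H : {set T} * {set {set T}}) :=
  [&& is_subgraph e H.1 H.2, sub_connected H.1 H.2 & S \subset H.1].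

(* The default value #|gedges e| is the edge count of G itself,
   which is admissible whenever G is connected, so for connected G this is
   exactly the minimum. *)
Definition steiner_dist (T : finType) (e : rel T) (S : {set T}) : nat :=
  \big[minn/#|gedges e|]_(H | steiner_adm e S H) #|H.2|.

Definition SW (k : nat) (T : finType) (e : rel T) : nat :=
  \sum_(S : {set T} | #|S| == k) steiner_dist e S.

Definition star_rel {n : nat} : rel 'I_n :=
  fun i j => ((val i == 0) && (val j != 0)) || ((val j == 0) && (val i != 0)).

From mathcomp Require Import all_boot all_order all_algebra.
Set Implicit Arguments. Unset Strict Implicit. Unset Printing Implicit Defensive.

(* In a graph with a universal vertex c, a k-set S has Steiner distance k - 1
   when some vertex of S is adjacent to all the others (in particular when c
   lies in S), and Steiner distance k when c is not in S and some vertex of S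
   has no neighbour in S: a connected subgraph with only k - 1 edges would have
   to be a spanning tree on S itself.  Add to the star with centre 0 the edges
   joining the leaf x + 1 to the leaves 1, ..., x, for every x in a.  In a set
   S of leaves with maximum m, the leaf m is adjacent to all of S when m - 1 is
   in a and has no neighbour in S otherwise.  So the Steiner distance drops by
   one exactly on the k-sets of leaves with maximum x + 1, x in a, and there
   are C(x, k - 1) of them. *)

Lemma eq_set2 (T : finType) (a b c d : T) :
  [set a; b] = [set c; d] -> (a = c /\ b = d) \/ (a = d /\ b = c).
Proof.
move=> E.
have: a \in [set c; d] by rewrite -E set21.
have: b \in [set c; d] by rewrite -E set22.
have: c \in [set a; b] by rewrite E set21.
have: d \in [set a; b] by rewrite E set22.
by rewrite !inE => /orP[]/eqP ? /orP[]/eqP ? /orP[]/eqP ? /orP[]/eqP ?; subst; auto.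
Qed.

Section BreadthFirstTree.
Variables (T : finType) (F : {set {set T}}) (r : T).
Local Notation adj := (frel_of F).

Fixpoint ball m : {set T} :=
  if m is m'.+1 then ball m' :|: [set y | [exists x in ball m', adj x y]]
  else [set r].

Lemma last_in_ball p : path adj r p -> last r p \in ball (size p).
Proof.
elim/last_ind: p => [|p z IHp] /=; first by rewrite set11.
rewrite rcons_path last_rcons size_rcons => /andP[/IHp p_in adj_z] /=.
by rewrite !inE; apply/orP; right; apply/existsP; exists (last r p); rewrite p_in.
Qed.

Lemma in_ball_or_disconnected v : exists m, (v \in ball m) || ~~ connect adj r v.
Proof.
have [/connectP[p rp ->]|] := boolP (connect adj r v); last by exists 0; rewrite orbT.
by exists (size p); rewrite last_in_ball.
Qed.

Definition depth v := ex_minn (in_ball_or_disconnected v).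

Lemma depth_min v m : v \in ball m -> depth v <= m.
Proof. by rewrite /depth; case: ex_minnP => d _ min_d v_m; rewrite min_d ?v_m. Qed.

Lemma in_ball_depth v : connect adj r v -> v \in ball (depth v).
Proof. by rewrite /depth; case: ex_minnP => d + _ rv; rewrite rv orbF. Qed.

Definition parent v := odflt r [pick x in ball (depth v).-1 | adj x v].

Lemma parentP v : connect adj r v -> v != r ->
  adj (parent v) v /\ depth (parent v) < depth v.
Proof.
move=> rv vr; have := in_ball_depth rv; rewrite /parent.
case Ed: (depth v) => [|m] /=; first by rewrite inE (negbTE vr).
rewrite inE => /orP[v_m|]; first by have := depth_min v_m; rewrite Ed ltnn.
rewrite inE => /existsP[x /andP[x_m adj_xv]].
case: pickP => [y /andP[y_m adj_yv]|no_pick]; first by split; rewrite ?ltnS ?depth_min.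
by have := no_pick x; rewrite x_m adj_xv.
Qed.

(* Each vertex of W other than r is mapped injectively to the edge joining it to its parent. *)
Lemma card_connected_le (W : {set T}) :
  r \in W -> sub_connected W F -> #|W| <= #|F|.+1.
Proof.
move=> rW connW.
have r_to v : v \in W -> connect adj r v.
  by move=> vW; move/forallP/(_ r): connW; rewrite rW => /forallP/(_ v); rewrite vW.
pose up v := [set v; parent v].
have up_inj : {in W :\ r &, injective up}.
  move=> v w; rewrite !inE => /andP[vr vW] /andP[wr wW] /eq_set2[[]//|[Ev Ew]].
  have [_ dv] := parentP (r_to v vW) vr; have [_ dw] := parentP (r_to w wW) wr.
  by move: dv dw; rewrite -Ev Ew => /ltn_trans h /h; rewrite ltnn.
have up_sub : up @: (W :\ r) \subset F.
  apply/subsetP=> f /imsetP[v]; rewrite !inE => /andP[vr vW] ->.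
  by have [+ _] := parentP (r_to v vW) vr; rewrite /frel_of setUC.
by rewrite (cardsD1 r W) rW ltnS -(card_in_imset up_inj) subset_leq_card.
Qed.

End BreadthFirstTree.

Lemma bigminn_le_cond (I : finType) (P : pred I) (F : I -> nat) x j :
  P j -> \big[minn/x]_(i | P i) F i <= F j.
Proof.
rewrite unlock; have := mem_index_enum j; elim: (index_enum I) => //= i s IHs.
rewrite inE => /orP[/eqP<- ->|/IHs le_j Pj]; first exact: geq_minl.
by case: (P i); rewrite ?le_j // (leq_trans (geq_minr _ _) (le_j Pj)).
Qed.

Section SteinerDistance.
Variables (T : finType) (e : rel T).

Lemma steiner_dist_eq (S : {set T}) d :
  (exists2 H, steiner_adm e S H & #|H.2| = d) ->
  (forall H, steiner_adm e S H -> d <= #|H.2|) -> steiner_dist e S = d.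
Proof.
move=> [H0 adm0 <-] lb; apply/eqP; rewrite eqn_leq bigminn_le_cond //=.
apply: (big_ind (fun m => #|H0.2| <= m)).
- by apply: subset_leq_card; case/and3P: adm0 => /andP[].
- by move=> m1 m2 le1 le2; rewrite leq_min le1 le2.
- exact: lb.
Qed.

Lemma steiner_adm_card (S : {set T}) H : steiner_adm e S H -> S != set0 -> #|S| <= #|H.2|.+1.
Proof.
case: H => W F /and3P[_ /= connWF SW] /set0Pn[r rS].
exact: leq_trans (subset_leq_card SW) (card_connected_le (subsetP SW r rS) connWF).
Qed.

Definition star_edges m (W : {set T}) : {set {set T}} := [set [set m; x] | x in W :\ m].

Lemma star_adm (S W : {set T}) m : m \in W -> S \subset W ->
  {in W :\ m, forall x, e m x} ->
  steiner_adm e S (W, star_edges m W) /\ #|star_edges m W| = #|W|.-1.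
Proof.
move=> mW SW adj_m; split; last first.
  rewrite card_in_imset; first by rewrite (cardsD1 m W) mW.
  move=> x y; rewrite !inE => /andP[xm _] /andP[ym _] /eq_set2[[_ //]|[_ Exm]].
  by rewrite Exm eqxx in xm.
have edge_at_m x : x \in W :\ m -> frel_of (star_edges m W) m x.
  by move=> xWm; apply/imsetP; exists x.
apply/and3P; split => //=.
- apply/andP; split.
    apply/subsetP => f /imsetP[x xWm ->]; rewrite inE.
    by apply/existsP; exists m; apply/existsP; exists x; rewrite adj_m ?eqxx.
  apply/forall_inP => f /imsetP[x]; rewrite !inE => /andP[_ xW] ->.
  by apply/subsetP=> y /set2P[]->.
- have star_sym : connect_sym (frel_of (star_edges m W)).
    by apply: sym_connect_sym => x y; rewrite /frel_of setUC.
  have to_m u : u \in W -> connect (frel_of (star_edges m W)) m u.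
    move=> uW; have [->|um] := eqVneq u m; first exact: connect0.
    by apply/connect1/edge_at_m; rewrite !inE um.
  apply/forallP=> u; apply/implyP=> uW; apply/forallP=> v; apply/implyP=> vW.
  by apply: connect_trans (to_m v vW); rewrite star_sym to_m.
Qed.

Definition star_spanned (S : {set T}) :=
  [exists m in S, [forall j in S, (j != m) ==> e m j]].

Lemma steiner_dist_star_spanned (S : {set T}) :
  star_spanned S -> steiner_dist e S = #|S|.-1.
Proof.
case/exists_inP=> m mS /forall_inP adj_m.
have S0 : S != set0 by apply/set0Pn; exists m.
have adj_m' : {in S :\ m, forall x, e m x}.
  by move=> x; rewrite !inE => /andP[xm xS]; have := adj_m x xS; rewrite xm.
have [adm card_edges] := star_adm mS (subxx S) adj_m'.
apply: steiner_dist_eq => [|H /steiner_adm_card/(_ S0) le_S]; first by exists (S, star_edges m S).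
by rewrite -ltnS prednK ?card_gt0.
Qed.

Lemma star_spanned_universal (S : {set T}) c :
  (forall y, y != c -> e c y) -> c \in S -> star_spanned S.
Proof.
by move=> c_univ cS; apply/exists_inP; exists c => //; apply/forall_inP=> y _; apply/implyP/c_univ.
Qed.

Hypothesis e_sym : symmetric e.

Lemma gedgesP x y : [set x; y] \in gedges e -> e x y.
Proof.
rewrite inE => /existsP[u /existsP[v /andP[e_uv /eqP/eq_set2[[-> ->]|[-> ->]]]]] //.
by rewrite e_sym.
Qed.

Lemma steiner_adm_tight (S : {set T}) H x :
  steiner_adm e S H -> #|H.2|.+1 = #|S| -> 1 < #|S| -> x \in S ->
  exists2 y, y \in S & e x y.
Proof.
case: H => W F /and3P[/andP[/= FE FW] /= connWF SW] /= card_F S2 xS.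
have WS : W = S.
  apply/esym/eqP; rewrite eqEcard SW -card_F.
  exact: card_connected_le (subsetP SW x xS) connWF.
subst W.
have [z] : exists z, z \in S :\ x.
  by apply/card_gt0P; move: S2; rewrite (cardsD1 x S) xS.
rewrite !inE => /andP[zx zS].
have /connectP[[|y p] /=] : connect (frel_of F) x z.
  by move/forall_inP/(_ x xS)/forall_inP/(_ z zS): connWF.
  by move=> _ Ezx; rewrite Ezx eqxx in zx.
move=> /andP[Fxy _] _; exists y; last exact/gedgesP/(subsetP FE).
by move/forall_inP/(_ _ Fxy)/subsetP: FW; apply; rewrite set22.
Qed.

Lemma steiner_dist_isolated (S : {set T}) c x :
  (forall y, y != c -> e c y) -> c \notin S -> 1 < #|S| ->
  x \in S -> {in S, forall y, ~~ e x y} -> steiner_dist e S = #|S|.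
Proof.
move=> c_univ cS S2 xS x_isolated.
have S0 : S != set0 by apply/set0Pn; exists x.
apply: steiner_dist_eq.
  have cW : c \in c |: S by rewrite setU11.
  have c_adj : {in (c |: S) :\ c, forall y, e c y}.
    by move=> y; rewrite in_setD1 => /andP[yc _]; apply: c_univ.
  have [adm card_edges] := star_adm cW (subsetUr [set c] S) c_adj.
  by exists (c |: S, star_edges c (c |: S)); rewrite // card_edges cardsU1 cS.
move=> H adm; have := steiner_adm_card adm S0; rewrite leq_eqVlt ltnS => /orP[/eqP E|//].
have [y yS] := steiner_adm_tight adm (esym E) S2 xS.
by rewrite (negbTE (x_isolated y yS)).
Qed.

End SteinerDistance.

Lemma gconnected_universal (T : finType) (e : rel T) c :
  symmetric e -> (forall y, y != c -> e c y) -> gconnected e.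
Proof.
move=> e_sym c_univ; split; first by apply/card_gt0P; exists c.
have from_c y : connect e c y.
  by have [->|yc] := eqVneq y c; [exact: connect0 | exact/connect1/c_univ].
by move=> x y; apply: connect_trans (from_c y); rewrite (sym_connect_sym e_sym).
Qed.

Section LeafSets.
Variable n : nat.
Implicit Type S : {set 'I_n.+1}.

Definition leaf_set_with_max (m : nat) S :=
  [forall j in S, 0 < val j <= m] && [exists j in S, val j == m].

Lemma exists_max_ord S : S != set0 -> exists2 M, M \in S & forall j, j \in S -> j <= M.
Proof. by case/set0Pn=> m mS; case: (arg_maxnP val mS) => M; exists M. Qed.

Lemma leaf_set_with_maxE S M m : ord0 \notin S -> M \in S ->
  (forall j, j \in S -> j <= M) -> leaf_set_with_max m S = (m == M).
Proof.
move=> S_leaves MS M_max; apply/andP/eqP => [[/forall_inP le_m /exists_inP[j jS /eqP Ejm]]|->].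
  subst m; have /andP[_ le_Mj] := le_m M MS.
  by apply/eqP; rewrite eqn_leq le_Mj M_max.
split; last by apply/exists_inP; exists M.
by apply/forall_inP => j jS; rewrite M_max // andbT lt0n (memPn S_leaves).
Qed.

Lemma leaf_set_with_max_centre S m : ord0 \in S -> leaf_set_with_max m S = false.
Proof. by move=> cS; rewrite /leaf_set_with_max; case: forall_inP => // /(_ _ cS). Qed.

Lemma card_leaves_upto x : x <= n -> #|[set j : 'I_n.+1 | 0 < val j <= x]| = x.
Proof.
move=> le_xn; have lt_x i : i < x -> i.+1 < n.+1 by move=> lt_ix; rewrite ltnS (leq_trans lt_ix).
have -> : [set j : 'I_n.+1 | 0 < val j <= x] = [set inord (val i).+1 | i : 'I_x].
  apply/setP=> j; rewrite inE; apply/idP/imsetP => [/andP[j0 le_jx]|[i _ ->]].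
    have lt_jx : (val j).-1 < x by rewrite prednK.
    by exists (Ordinal lt_jx) => //; apply: val_inj; rewrite /= inordK prednK.
  by rewrite /= inordK ?lt_x ?ltn_ord.
rewrite card_imset ?card_ord // => i1 i2 /(congr1 val).
by rewrite /= !inordK ?lt_x ?ltn_ord // => -[/val_inj].
Qed.

Lemma card_leaf_sets_with_max x k : x < n -> 0 < k ->
  #|[set S : {set 'I_n.+1} | (#|S| == k) && leaf_set_with_max x.+1 S]| = 'C(x, k.-1).
Proof.
move=> lt_xn k0; pose p : 'I_n.+1 := Ordinal (lt_xn : x.+1 < n.+1).
pose B := [set j : 'I_n.+1 | 0 < val j <= x].
have pB : p \notin B by rewrite inE /= ltnn.
have notin_p (U : {set 'I_n.+1}) : U \subset B -> p \notin U.
  by move=> UB; apply: contra pB; apply: (subsetP UB).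
have -> : [set S : {set 'I_n.+1} | (#|S| == k) && leaf_set_with_max x.+1 S] =
          [set p |: U | U in [set U : {set 'I_n.+1} | U \subset B & #|U| == k.-1]].
  apply/setP=> S; rewrite inE; apply/idP/imsetP.
    case/andP=> /eqP Sk /andP[/forall_inP le_Sx /exists_inP[q qS /eqP Eq]].
    have Eqp : q = p by apply: val_inj.
    subst q; exists (S :\ p); last by rewrite setD1K.
    rewrite inE -Sk (cardsD1 p S) qS eqxx andbT; apply/subsetP=> j.
    rewrite !inE => /andP[jp jS]; have /andP[-> le_jx] := le_Sx j jS.
    by rewrite -ltnS ltn_neqAle le_jx andbT; apply: contra jp => /eqP E; apply/eqP/val_inj.
  case=> U; rewrite inE => /andP[UB /eqP Uk] ->.
  rewrite cardsU1 notin_p // Uk add1n prednK // eqxx /=.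
  apply/andP; split; last by apply/exists_inP; exists p; rewrite ?setU11.
  apply/forall_inP=> j; rewrite !inE => /orP[/eqP Ejp|jU]; first by rewrite Ejp /= leqnn.
  by have := subsetP UB j jU; rewrite inE => /andP[-> /leqW].
rewrite card_in_imset ?cards_draws ?(card_leaves_upto (ltnW lt_xn)) // => U1 U2.
rewrite !inE => /andP[U1B _] /andP[U2B _] E.
by rewrite -(setU1K (notin_p _ U1B)) -(setU1K (notin_p _ U2B)) E.
Qed.

End LeafSets.

Section AugmentedStar.
Variables (n : nat) (a : seq nat).
Implicit Types (S : {set 'I_n.+1}) (u v : 'I_n.+1).

Definition aug_star : rel 'I_n.+1 := fun u v =>
  star_rel u v || [&& u != ord0, v != ord0, u != v & (maxn u v).-1 \in a].

Lemma star_rel_sym : symmetric (@star_rel n.+1).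
Proof. by move=> u v; rewrite /star_rel orbC. Qed.

Lemma star_rel_centre v : v != ord0 -> star_rel ord0 v.
Proof. by rewrite /star_rel eqxx => ->. Qed.

Lemma star_rel_leaves u v : u != ord0 -> v != ord0 -> star_rel u v = false.
Proof.
by rewrite /star_rel -[val u == 0]/(u == ord0) -[val v == 0]/(v == ord0) => /negbTE-> /negbTE->.
Qed.

Lemma star_rel_simple : simple_graph (@star_rel n.+1).
Proof. by split=> [|u]; [exact: star_rel_sym | rewrite /star_rel orbb; case: eqP]. Qed.

Lemma aug_star_simple : simple_graph aug_star.
Proof.
split=> [u v|u]; last by rewrite /aug_star (snd star_rel_simple) eqxx !andbF.
by rewrite /aug_star star_rel_sym maxnC [v == u]eq_sym; do 2!bool_congr.
Qed.

Lemma aug_star_centre v : v != ord0 -> aug_star ord0 v.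
Proof. by move=> v0; rewrite /aug_star star_rel_centre. Qed.

Lemma aug_star_leaves u v : u != ord0 -> v != ord0 ->
  aug_star u v = (u != v) && ((maxn u v).-1 \in a).
Proof. by move=> u0 v0; rewrite /aug_star star_rel_leaves ?u0 ?v0. Qed.

Section LeafSetMax.
Variables (S : {set 'I_n.+1}) (M : 'I_n.+1).
Hypotheses (S_leaves : ord0 \notin S) (MS : M \in S) (M_max : forall j, j \in S -> j <= M).

Lemma aug_star_from_max j : j \in S -> aug_star M j = (M != j) && ((val M).-1 \in a).
Proof.
move=> jS; rewrite aug_star_leaves ?(memPn S_leaves) //.
by rewrite (maxn_idPl (M_max jS)).
Qed.

Lemma star_spanned_aug_star : 1 < #|S| -> star_spanned aug_star S = ((val M).-1 \in a).
Proof.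
move=> S2; apply/exists_inP/idP => [[m mS /forall_inP adj_m]|Ma].
  have [Em|mM] := eqVneq m M; first subst m.
    have [j] : exists j, j \in S :\ M.
      by apply/card_gt0P; move: S2; rewrite (cardsD1 M S) MS.
    rewrite !inE => /andP[jM jS].
    by have := adj_m j jS; rewrite jM aug_star_from_max // eq_sym jM.
  have := adj_m M MS; rewrite eq_sym mM (fst aug_star_simple) aug_star_from_max //.
  by case/andP.
exists M => //; apply/forall_inP=> j jS; apply/implyP=> jM.
by rewrite aug_star_from_max // eq_sym jM.
Qed.

Lemma max_isolated_aug_star : (val M).-1 \notin a -> {in S, forall j, ~~ aug_star M j}.
Proof. by move=> Ma j jS; rewrite aug_star_from_max // (negbTE Ma) andbF. Qed.

End LeafSetMax.

Lemma steiner_dist_star_aug S : 1 < #|S| ->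
  steiner_dist (@star_rel n.+1) S =
    steiner_dist aug_star S + ((ord0 \notin S) && star_spanned aug_star S).
Proof.
move=> S2; have S0 : S != set0 by rewrite -card_gt0 ltnW.
have [cS|S_leaves] /= := boolP (ord0 \in S).
  rewrite !steiner_dist_star_spanned ?addn0 //; apply: (star_spanned_universal _ cS).
    exact: aug_star_centre.
  exact: star_rel_centre.
have [M MS M_max] := exists_max_ord S0.
have star_isolated : {in S, forall j, ~~ star_rel M j}.
  by move=> j jS; rewrite star_rel_leaves ?(memPn S_leaves).
rewrite (steiner_dist_isolated (fst star_rel_simple) star_rel_centre S_leaves S2 MS star_isolated).
rewrite (star_spanned_aug_star S_leaves MS M_max S2).
have [Ma|Ma] := boolP ((val M).-1 \in a).
  rewrite steiner_dist_star_spanned ?addn1 ?prednK ?card_gt0 //.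
  by rewrite (star_spanned_aug_star S_leaves MS M_max S2).
by rewrite (steiner_dist_isolated (fst aug_star_simple) aug_star_centre S_leaves S2 MS
  (max_isolated_aug_star S_leaves MS M_max Ma)) addn0.
Qed.

Lemma star_spanned_leaf_count S : 1 < #|S| -> uniq a ->
  (ord0 \notin S) && star_spanned aug_star S = \sum_(x <- a) leaf_set_with_max x.+1 S :> nat.
Proof.
move=> S2 a_uniq; have S0 : S != set0 by rewrite -card_gt0 ltnW.
have [cS|S_leaves] /= := boolP (ord0 \in S).
  by rewrite big1 // => x _; rewrite leaf_set_with_max_centre.
have [M MS M_max] := exists_max_ord S0.
have M0 : 0 < val M by rewrite lt0n (memPn S_leaves).
rewrite (star_spanned_aug_star S_leaves MS M_max S2) -count_uniq_mem // -sum1_count big_mkcond.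
apply: eq_bigr => x _; rewrite (leaf_set_with_maxE _ S_leaves MS M_max) /= -(prednK M0) eqSS.
by case: eqP.
Qed.

Lemma SW_star_aug k : 1 < k -> uniq a -> all (fun x => x < n) a ->
  SW k (@star_rel n.+1) = SW k aug_star + \sum_(x <- a) 'C(x, k.-1).
Proof.
move=> k2 a_uniq a_lt.
have per_set S : #|S| == k -> steiner_dist (@star_rel n.+1) S =
    steiner_dist aug_star S + \sum_(x <- a) leaf_set_with_max x.+1 S.
  by move=> /eqP Sk; rewrite steiner_dist_star_aug -?star_spanned_leaf_count ?Sk.
rewrite /SW (eq_bigr _ per_set) big_split /= exchange_big /=; congr (_ + _).
apply: eq_big_seq => x xa; rewrite -big_mkcondr sum1dep_card.
by rewrite card_leaf_sets_with_max ?(allP a_lt) // (ltnW k2).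
Qed.

End AugmentedStar.

Import GRing.Theory.
Local Open Scope ring_scope.

Theorem proposition1p2 (k n : nat) (a : seq nat) :
  (2 <= k)%N -> (0 < n)%N ->
  sorted ltn a -> all (fun x => 0 < x)%N a -> all (fun x => x < n - 1)%N a ->
  exists (T : finType) (e : rel T),
    [/\ simple_graph e, gconnected e &
        ((SW k e)%:Z = (SW k (@star_rel n))%:Z
                        - (\sum_(x <- a) 'C(x, k - 1))%:Z)].
Proof.
move=> k2 n0 a_sorted _ a_lt.
case: n n0 a_lt => [//|n] _; rewrite subn1 /= => a_lt.
have a_uniq : uniq a := sorted_uniq ltn_trans ltnn a_sorted.
exists 'I_n.+1, (@aug_star n a); split.
- exact: aug_star_simple.
- exact: gconnected_universal (fst (@aug_star_simple n a)) (@aug_star_centre n a).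
- by rewrite subn1 (SW_star_aug k2 a_uniq a_lt) PoszD addrK.
Qed.
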